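(* Drift-less setting with target $\rho_d=|\Psi\rangle\langle\Psi|$. Let $D_k=D_{\mathcal N_k}\otimes I_{\bar{\mathcal N}_k}$ be QL operators with $D_k|\Psi\rangle=0$ such that $\mathfrak D(\mathcal H_0)$ is globally asymptotically stable for $\mathcal L_D=\mathcal L(0,\{D_k\})$ (every trajectory $e^{\mathcal L_Dt}(\rho_0)$, $\rho_0\in\mathfrak D(\mathcal H)$, converges to the set $\mathfrak D(\mathcal H_0)$). Let $\mathcal H'$ be a subspace with $\mathcal H_d\subseteq\mathcal H'\subseteq\mathcal H\ominus\mathcal H_w$ such that $\mathfrak D(\mathcal H')$ is invariant under $e^{\mathcal L_Dt}$ for all $t\ge0$. Then $\rho_d$ is conditionally asymptotically stable relative to $\mathcal H'$ for $\mathcal L_D$, i.e. $\rho_d$ is $\mathcal H'$-DQLS.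
   Context: $\mathcal H=\bigotimes_{a=1}^n\mathcal H_a$ finite-dimensional; neighborhoods $\mathcal N_k\subsetneq\{1,\dots,n\}$; QL operators have the form $X\otimes I_{\bar{\mathcal N}_k}$. $\mathfrak D(\mathcal K)$: density operators supported in $\mathcal K$. $\mathcal L(0,\{D_k\})(\rho)=\sum_k(D_k\rho D_k^\dagger-\frac12\{D_k^\dagger D_k,\rho\})$. $\mathcal H_d=\mathrm{span}\{|\Psi\rangle\}$; $\rho_{\mathcal N_k}=\mathrm{Tr}_{\bar{\mathcal N}_k}\rho_d$; $\mathcal H_0=\bigcap_k\mathrm{supp}(\rho_{\mathcal N_k}\otimes I_{\bar{\mathcal N}_k})$; $\mathcal H_w=\mathcal H_0\ominus\mathcal H_d$. Conditional asymptotic stability relative to $\mathcal H'$: $e^{\mathcal L_Dt}(\rho_0)\to\rho_d$ for all $\rho_0\in\mathfrak D(\mathcal H')$. *)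

From Stdlib Require Import Reals List Arith.
Import ListNotations.
Open Scope R_scope.

Record C := mkC { Re : R; Im : R }.
Definition C0 : C := mkC 0 0.
Definition Cadd (x y : C) : C := mkC (Re x + Re y) (Im x + Im y).
Definition Copp (x : C) : C := mkC (- Re x) (- Im x).
Definition Csub (x y : C) : C := Cadd x (Copp y).
Definition Cmul (x y : C) : C :=
  mkC (Re x * Re y - Im x * Im y) (Re x * Im y + Im x * Re y).
Definition Cconj (x : C) : C := mkC (Re x) (- Im x).
Definition Cscal (r : R) (x : C) : C := mkC (r * Re x) (r * Im x).
Definition Cnorm2 (x : C) : R := Re x * Re x + Im x * Im x.

Fixpoint Csum (n : nat) (f : nat -> C) : C :=
  match n with O => C0 | S m => Cadd (Csum m f) (f m) end.

Fixpoint Rsum (n : nat) (f : nat -> R) : R :=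
  match n with O => 0 | S m => Rsum m f + f m end.

(** Matrices / vectors of dimension N: only entries with indices < N matter. *)
Definition Mat := nat -> nat -> C.
Definition Vec := nat -> C.

Definition mmul (N : nat) (A B : Mat) : Mat :=
  fun i j => Csum N (fun k => Cmul (A i k) (B k j)).
Definition madd (A B : Mat) : Mat := fun i j => Cadd (A i j) (B i j).
Definition msub (A B : Mat) : Mat := fun i j => Csub (A i j) (B i j).
Definition mscal (r : R) (A : Mat) : Mat := fun i j => Cscal r (A i j).
Definition adj (A : Mat) : Mat := fun i j => Cconj (A j i).
Definition mapply (N : nat) (A : Mat) (v : Vec) : Vec :=
  fun i => Csum N (fun j => Cmul (A i j) (v j)).
Definition inner (N : nat) (u v : Vec) : C :=
  Csum N (fun i => Cmul (Cconj (u i)) (v i)).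
Definition trace (N : nat) (A : Mat) : C := Csum N (fun i => A i i).
Definition ketbra (psi : Vec) : Mat := fun i j => Cmul (psi i) (Cconj (psi j)).

Definition Lindblad (N K : nat) (Ds : nat -> Mat) (rho : Mat) : Mat :=
  fun i j => Csum K (fun k =>
    let D := Ds k in
    let DdD := mmul N (adj D) D in
    msub (mmul N (mmul N D rho) (adj D))
         (mscal (1/2) (madd (mmul N DdD rho) (mmul N rho DdD))) i j).

Definition Lpow (N K : nat) (Ds : nat -> Mat) (m : nat) (rho : Mat) : Mat :=
  Nat.iter m (Lindblad N K Ds) rho.

(** Evol N K Ds t rho0 sigma : sigma = e^{L t}(rho0), the exponential being
    the entrywise sum of the power series  sum_m t^m/m! L^m(rho0). *)
Definition Evol (N K : nat) (Ds : nat -> Mat) (t : R) (rho0 sigma : Mat) : Prop :=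
  forall i j, (i < N)%nat -> (j < N)%nat ->
    infinite_sum (fun m => Re (Cscal (t ^ m / INR (fact m)) (Lpow N K Ds m rho0 i j)))
                 (Re (sigma i j)) /\
    infinite_sum (fun m => Im (Cscal (t ^ m / INR (fact m)) (Lpow N K Ds m rho0 i j)))
                 (Im (sigma i j)).

Definition is_density (N : nat) (s : Mat) : Prop :=
  (forall i j, (i < N)%nat -> (j < N)%nat -> s i j = Cconj (s j i)) /\
  (forall v : Vec, 0 <= Re (inner N v (mapply N s v))) /\
  Re (trace N s) = 1.

(** s in D(Ksp): density operator whose support (= range) lies in Ksp *)
Definition dens_in (N : nat) (Ksp : Vec -> Prop) (s : Mat) : Prop :=
  is_density N s /\ forall v : Vec, Ksp (mapply N s v).

Definition hsdist2 (N : nat) (A B : Mat) : R :=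
  Rsum N (fun i => Rsum N (fun j => Cnorm2 (Csub (A i j) (B i j)))).

Definition is_subspace (N : nat) (P : Vec -> Prop) : Prop :=
  P (fun _ => C0) /\
  (forall u v, P u -> P v -> P (fun i => Cadd (u i) (v i))) /\
  (forall c u, P u -> P (fun i => Cmul c (u i))) /\
  (forall u v, (forall i, (i < N)%nat -> u i = v i) -> P u -> P v).

(** Tensor-product structure: n subsystems of dimensions d 0, ..., d (n-1);
    basis index i < dimH n d  <->  digit tuple (digit d i a)_{a<n} (mixed radix). *)
Fixpoint prodd (d : nat -> nat) (a : nat) : nat :=
  match a with O => 1%nat | S b => (prodd d b * d b)%nat end.
Definition dimH (n : nat) (d : nat -> nat) : nat := prodd d n.
Definition digit (d : nat -> nat) (i a : nat) : nat := ((i / prodd d a) mod d a)%nat.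

Definition agree_out (n : nat) (S : nat -> bool) (x y : nat -> nat) : bool :=
  forallb (fun a => orb (S a) (Nat.eqb (x a) (y a))) (seq 0 n).
Definition agree_in (n : nat) (S : nat -> bool) (x y : nat -> nat) : bool :=
  forallb (fun a => orb (negb (S a)) (Nat.eqb (x a) (y a))) (seq 0 n).
Definition restrict (n : nat) (S : nat -> bool) (x : nat -> nat) : nat -> nat :=
  fun a => if andb (Nat.ltb a n) (S a) then x a else 0%nat.

(** A is quasi-local w.r.t. neighborhood S: A = X_S (x) I_{complement of S} *)
Definition QL (n : nat) (d : nat -> nat) (S : nat -> bool) (A : Mat) : Prop :=
  exists X : (nat -> nat) -> (nat -> nat) -> C,
    forall i j, (i < dimH n d)%nat -> (j < dimH n d)%nat ->
      A i j = if agree_out n S (digit d i) (digit d j)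
              then X (restrict n S (digit d i)) (restrict n S (digit d j))
              else C0.

(** (Tr_{complement of S} rho) (x) I_{complement of S} *)
Definition margI (n : nat) (d : nat -> nat) (S : nat -> bool) (rho : Mat) : Mat :=
  fun i j =>
    if agree_out n S (digit d i) (digit d j) then
      Csum (dimH n d) (fun l => Csum (dimH n d) (fun m =>
        if andb (agree_in n S (digit d l) (digit d i))
           (andb (agree_in n S (digit d m) (digit d j))
                 (agree_out n S (digit d l) (digit d m)))
        then rho l m else C0))
    else C0.

Definition Hd (N : nat) (psi : Vec) (v : Vec) : Prop :=
  exists c : C, forall i, (i < N)%nat -> v i = Cmul c (psi i).

Definition H0 (n : nat) (d : nat -> nat) (K : nat) (Ns : nat -> nat -> bool)
  (rhod : Mat) (v : Vec) : Prop :=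
  forall k, (k < K)%nat -> exists w : Vec, forall i, (i < dimH n d)%nat ->
    v i = mapply (dimH n d) (margI n d (Ns k) rhod) w i.

Definition Hw (n : nat) (d : nat -> nat) (K : nat) (Ns : nat -> nat -> bool)
  (psi : Vec) (v : Vec) : Prop :=
  H0 n d K Ns (ketbra psi) v /\
  forall u, Hd (dimH n d) psi u -> inner (dimH n d) u v = C0.

Definition perp_Hw (n : nat) (d : nat -> nat) (K : nat) (Ns : nat -> nat -> bool)
  (psi : Vec) (v : Vec) : Prop :=
  forall w, Hw n d K Ns psi w -> inner (dimH n d) w v = C0.

(** Let r(t) = e^{L t}(rho0) with rho0 in D(H'). Global attractivity
    of D(H_0) gives, for large t, a density operator s with range in H_0 that
    is close to r(t); applied to the stationary state rho_d = |psi><psi| (every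
    D_k kills psi) it also gives s0 in D(H_0) close to rho_d, so y := s0 psi is a
    vector of H_0 close to psi. For each column s e_j the combination
    <psi,y> s e_j - <psi,s e_j> y lies in H_0 and is orthogonal to psi, i.e. it
    lies in H_w. By invariance r(t) has range in H' and H' is orthogonal to H_w,
    so r(t) annihilates these approximate copies of the columns of r(t)
    projected away from psi. A quantitative estimate then shows that r(t) is
    within O(delta) of rho_d in squared Hilbert-Schmidt distance. *)

From Stdlib Require Import Reals Arith Lra Lia Psatz.
Open Scope R_scope.

Lemma C_ext (x y : C) : Re x = Re y -> Im x = Im y -> x = y.
Proof. destruct x, y; simpl; intros; subst; reflexivity. Qed.

Ltac Csolve := apply C_ext; simpl; ring.

Definition Cone : C := mkC 1 0.

Definition ev (j : nat) : Vec := fun k => if Nat.eqb k j then Cone else C0.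

Lemma Csum_ext n f g :
  (forall k, (k < n)%nat -> f k = g k) -> Csum n f = Csum n g.
Proof.
  revert f g; induction n as [|n IH]; intros f g H; simpl; [reflexivity|].
  rewrite (IH f g), H by (auto; intros; apply H; lia). reflexivity.
Qed.

Lemma Csum_zero n f : (forall k, (k < n)%nat -> f k = C0) -> Csum n f = C0.
Proof.
  revert f; induction n as [|n IH]; intros f H; simpl; [reflexivity|].
  rewrite IH, H by (auto; intros; apply H; lia). Csolve.
Qed.

Lemma Csum_add n f g :
  Csum n (fun k => Cadd (f k) (g k)) = Cadd (Csum n f) (Csum n g).
Proof. induction n as [|n IH]; simpl; [|rewrite IH]; Csolve. Qed.

Lemma Csum_sub n f g :
  Csum n (fun k => Csub (f k) (g k)) = Csub (Csum n f) (Csum n g).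
Proof. induction n as [|n IH]; simpl; [|rewrite IH]; Csolve. Qed.

Lemma Csum_mull n c f : Csum n (fun k => Cmul c (f k)) = Cmul c (Csum n f).
Proof. induction n as [|n IH]; simpl; [|rewrite IH]; Csolve. Qed.

Lemma Csum_mulr n c f : Csum n (fun k => Cmul (f k) c) = Cmul (Csum n f) c.
Proof. induction n as [|n IH]; simpl; [|rewrite IH]; Csolve. Qed.

Lemma Csum_conj n f : Csum n (fun k => Cconj (f k)) = Cconj (Csum n f).
Proof. induction n as [|n IH]; simpl; [|rewrite IH]; Csolve. Qed.

Lemma Csum_swap n m f :
  Csum n (fun i => Csum m (fun j => f i j)) = Csum m (fun j => Csum n (fun i => f i j)).
Proof.
  revert m f; induction n as [|n IH]; intros m f; simpl.
  - symmetry; apply Csum_zero; intros; Csolve.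
  - rewrite IH, <- Csum_add. reflexivity.
Qed.

Lemma Re_Csum n f : Re (Csum n f) = Rsum n (fun k => Re (f k)).
Proof. induction n as [|n IH]; simpl; [|rewrite IH]; reflexivity. Qed.

Lemma Im_Csum n f : Im (Csum n f) = Rsum n (fun k => Im (f k)).
Proof. induction n as [|n IH]; simpl; [|rewrite IH]; reflexivity. Qed.

Lemma Csum_delta n j f : (j < n)%nat -> Csum n (fun k => Cmul (f k) (ev j k)) = f j.
Proof.
  revert j f; induction n as [|n IH]; intros j f Hj; [lia|]. simpl.
  unfold ev at 2. destruct (Nat.eqb n j) eqn:E.
  - apply Nat.eqb_eq in E; subst.
    rewrite Csum_zero; [Csolve|]. intros k Hk. unfold ev.
    destruct (Nat.eqb k j) eqn:E'; [apply Nat.eqb_eq in E'; lia|]. Csolve.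
  - apply Nat.eqb_neq in E. rewrite IH by lia. Csolve.
Qed.

Lemma Csum_delta_l n j f : (j < n)%nat ->
  Csum n (fun k => Cmul (Cconj (ev j k)) (f k)) = f j.
Proof.
  intros Hj. rewrite <- (Csum_delta n j f Hj). apply Csum_ext; intros.
  unfold ev; destruct (Nat.eqb k j); Csolve.
Qed.

Lemma mapply_ev N s j i : (j < N)%nat -> mapply N s (ev j) i = s i j.
Proof. intros Hj. apply Csum_delta; exact Hj. Qed.

Lemma mapply_lin N M w1 w2 a c i :
  mapply N M (fun k => Csub (Cmul a (w1 k)) (Cmul c (w2 k))) i =
  Csub (Cmul a (mapply N M w1 i)) (Cmul c (mapply N M w2 i)).
Proof.
  unfold mapply. rewrite <- !Csum_mull, <- Csum_sub. apply Csum_ext; intros; Csolve.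
Qed.

Lemma Rsum_ext n f g : (forall k, (k < n)%nat -> f k = g k) -> Rsum n f = Rsum n g.
Proof.
  revert f g; induction n as [|n IH]; intros f g H; simpl; [reflexivity|].
  rewrite (IH f g), H by (auto; intros; apply H; lia). reflexivity.
Qed.

Lemma Rsum_le n f g : (forall k, (k < n)%nat -> f k <= g k) -> Rsum n f <= Rsum n g.
Proof.
  revert f g; induction n as [|n IH]; intros f g H; simpl; [lra|].
  assert (Rsum n f <= Rsum n g) by (apply IH; intros; apply H; lia).
  assert (f n <= g n) by (apply H; lia). lra.
Qed.

Lemma Rsum_const n B : Rsum n (fun _ => B) = INR n * B.
Proof. induction n as [|n IH]; simpl Rsum; [simpl; ring|]. rewrite IH, S_INR; ring. Qed.

Lemma Rsum_bound n f B : (forall k, (k < n)%nat -> f k <= B) -> Rsum n f <= INR n * B.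
Proof. intros. rewrite <- Rsum_const. apply Rsum_le; auto. Qed.

Lemma Rsum_nonneg n f : (forall k, (k < n)%nat -> 0 <= f k) -> 0 <= Rsum n f.
Proof. intros. replace 0 with (INR n * 0) by ring. rewrite <- Rsum_const. apply Rsum_le; auto. Qed.

Lemma Rsum_term n f i :
  (forall k, (k < n)%nat -> 0 <= f k) -> (i < n)%nat -> f i <= Rsum n f.
Proof.
  revert f i; induction n as [|n IH]; intros f i H Hi; [lia|]. simpl.
  destruct (Nat.eq_dec i n) as [->|Hne].
  - assert (0 <= Rsum n f) by (apply Rsum_nonneg; intros; apply H; lia). lra.
  - assert (f i <= Rsum n f) by (apply IH; [intros; apply H; lia | lia]).
    assert (0 <= f n) by (apply H; lia). lra.
Qed.

(** Entrywise estimates are carried out with the l1-size [cm] of a complex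
    number, which is subadditive and submultiplicative and is comparable to
    the squared modulus [Cnorm2] used by the Hilbert-Schmidt distance. *)

Definition cm (x : C) : R := Rabs (Re x) + Rabs (Im x).

Lemma cm_nonneg x : 0 <= cm x.
Proof. unfold cm; pose proof (Rabs_pos (Re x)); pose proof (Rabs_pos (Im x)); lra. Qed.

Lemma cm_C0 : cm C0 = 0.
Proof. unfold cm; simpl; rewrite Rabs_R0; ring. Qed.

Lemma cm_add x y : cm (Cadd x y) <= cm x + cm y.
Proof.
  unfold cm; simpl. pose proof (Rabs_triang (Re x) (Re y)).
  pose proof (Rabs_triang (Im x) (Im y)). lra.
Qed.

Lemma cm_opp x : cm (Copp x) = cm x.
Proof. unfold cm; simpl. rewrite !Rabs_Ropp; reflexivity. Qed.

Lemma cm_conj x : cm (Cconj x) = cm x.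
Proof. unfold cm; simpl. rewrite !Rabs_Ropp; reflexivity. Qed.

Lemma cm_sub_sym x y : cm (Csub x y) = cm (Csub y x).
Proof. replace (Csub y x) with (Copp (Csub x y)) by Csolve. rewrite cm_opp; reflexivity. Qed.

Lemma cm_mul x y : cm (Cmul x y) <= cm x * cm y.
Proof.
  destruct x as [a b], y as [c e]; unfold cm; simpl.
  pose proof (Rabs_triang (a * c) (- (b * e))) as H1.
  pose proof (Rabs_triang (a * e) (b * c)) as H2.
  rewrite Rabs_Ropp, !Rabs_mult in H1. rewrite !Rabs_mult in H2.
  pose proof (Rabs_pos a); pose proof (Rabs_pos b).
  pose proof (Rabs_pos c); pose proof (Rabs_pos e).
  unfold Rminus. replace (b * - e) with (- (b * e)) by ring. lra.
Qed.

Lemma cm_mul_bound x y a b : cm x <= a -> cm y <= b -> cm (Cmul x y) <= a * b.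
Proof.
  intros. eapply Rle_trans; [apply cm_mul|].
  apply Rmult_le_compat; auto using cm_nonneg.
Qed.

Lemma cm_Csum_bound n f B :
  (forall k, (k < n)%nat -> cm (f k) <= B) -> cm (Csum n f) <= INR n * B.
Proof.
  intros H. rewrite <- Rsum_const. revert H; induction n as [|n IH]; intros H; simpl.
  - rewrite cm_C0; lra.
  - eapply Rle_trans; [apply cm_add|].
    apply Rplus_le_compat; [apply IH; intros; apply H; lia | apply H; lia].
Qed.

Lemma Rabs_sq a : Rabs a * Rabs a = a * a.
Proof. rewrite <- Rabs_mult. apply Rabs_pos_eq. nra. Qed.

Lemma Cnorm2_nonneg x : 0 <= Cnorm2 x.
Proof. destruct x as [a b]; unfold Cnorm2; simpl; nra. Qed.

Lemma cm_sq x : cm x * cm x <= 2 * Cnorm2 x.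
Proof.
  destruct x as [a b]; unfold cm, Cnorm2; simpl.
  pose proof (Rabs_sq a); pose proof (Rabs_sq b).
  pose proof (Rle_0_sqr (Rabs a - Rabs b)); unfold Rsqr in *. nra.
Qed.

Lemma Cnorm2_cm x : Cnorm2 x <= cm x * cm x.
Proof.
  destruct x as [a b]; unfold cm, Cnorm2; simpl.
  pose proof (Rabs_sq a); pose proof (Rabs_sq b).
  pose proof (Rabs_pos a); pose proof (Rabs_pos b). nra.
Qed.

Lemma cm_le_2 x : Cnorm2 x <= 1 -> cm x <= 2.
Proof. intros. pose proof (cm_sq x). pose proof (cm_nonneg x). nra. Qed.

Lemma Rabs_Re_le_cm x : Rabs (Re x) <= cm x.
Proof. unfold cm; pose proof (Rabs_pos (Im x)); lra. Qed.

Section Density.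
Variables (N : nat) (s : Mat).
Hypothesis Hs : is_density N s.

Lemma dens_herm i j : (i < N)%nat -> (j < N)%nat -> s i j = Cconj (s j i).
Proof. destruct Hs as [H _]; auto. Qed.

Lemma dens_diag_im i : (i < N)%nat -> Im (s i i) = 0.
Proof.
  intros Hi. pose proof (dens_herm i i Hi Hi) as E.
  destruct (s i i) as [a b]; simpl in *. injection E; intros; lra.
Qed.

Lemma dens_diag_nonneg i : (i < N)%nat -> 0 <= Re (s i i).
Proof.
  intros Hi. destruct Hs as [_ [Hpos _]]. specialize (Hpos (ev i)). unfold inner in Hpos.
  rewrite (Csum_ext _ _ (fun k => Cmul (Cconj (ev i k)) (s k i))) in Hpos
    by (intros; rewrite mapply_ev; auto).
  rewrite Csum_delta_l in Hpos; auto.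
Qed.

Lemma dens_trace : Csum N (fun i => s i i) = Cone.
Proof.
  destruct Hs as [_ [_ Htr]]. unfold trace in Htr. apply C_ext; simpl; auto.
  rewrite Im_Csum. replace 0 with (INR N * 0) by ring. rewrite <- Rsum_const.
  apply Rsum_ext; intros; apply dens_diag_im; auto.
Qed.

Lemma dens_diag_le1 i : (i < N)%nat -> Re (s i i) <= 1.
Proof.
  intros Hi. destruct Hs as [_ [_ Htr]]. unfold trace in Htr. rewrite Re_Csum in Htr.
  rewrite <- Htr. apply (Rsum_term N (fun k => Re (s k k))); auto.
  intros; apply dens_diag_nonneg; auto.
Qed.

(* Off the diagonal, positivity on e_i - conj(s_ij) e_j gives
   |s_ij|^2 <= s_ii s_jj <= 1. *)
Lemma dens_bound i j : (i < N)%nat -> (j < N)%nat -> Cnorm2 (s i j) <= 1.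
Proof.
  intros Hi Hj. destruct (Nat.eq_dec i j) as [->|Hne].
  { unfold Cnorm2. rewrite dens_diag_im; auto.
    pose proof (dens_diag_nonneg j Hj); pose proof (dens_diag_le1 j Hj). nra. }
  destruct Hs as [_ [Hpos _]].
  set (y := Copp (Cconj (s i j))).
  specialize (Hpos (fun k => Cadd (ev i k) (Cmul y (ev j k)))).
  assert (Happ : forall a, mapply N s (fun k => Cadd (ev i k) (Cmul y (ev j k))) a
                           = Cadd (s a i) (Cmul y (s a j))).
  { intros a. unfold mapply.
    rewrite (Csum_ext _ _ (fun k => Cadd (Cmul (s a k) (ev i k))
                                         (Cmul y (Cmul (s a k) (ev j k)))))
      by (intros; Csolve).
    rewrite Csum_add, Csum_mull, !Csum_delta; auto. }
  unfold inner in Hpos.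
  rewrite (Csum_ext _ _ (fun a => Cadd (Cmul (Cconj (ev i a)) (Cadd (s a i) (Cmul y (s a j))))
      (Cmul (Cconj y) (Cmul (Cconj (ev j a)) (Cadd (s a i) (Cmul y (s a j))))))) in Hpos
    by (intros; rewrite Happ; Csolve).
  rewrite Csum_add, Csum_mull, !(Csum_delta_l N) in Hpos; auto.
  rewrite (dens_herm j i) in Hpos; auto.
  pose proof (dens_diag_im i Hi); pose proof (dens_diag_im j Hj).
  pose proof (dens_diag_nonneg i Hi); pose proof (dens_diag_le1 i Hi).
  pose proof (dens_diag_nonneg j Hj); pose proof (dens_diag_le1 j Hj).
  unfold y in Hpos. destruct (s i j) as [a b], (s i i) as [p q], (s j j) as [u v].
  simpl in *. unfold Cnorm2; simpl. subst. nra.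
Qed.

Lemma dens_cm i j : (i < N)%nat -> (j < N)%nat -> cm (s i j) <= 2.
Proof. intros; apply cm_le_2, dens_bound; auto. Qed.

End Density.

Section Target.
Variables (N : nat) (psi : Vec).
Hypothesis hpsi : Re (inner N psi psi) = 1.

Lemma psi_inner : inner N psi psi = Cone.
Proof.
  apply C_ext; auto. unfold inner; rewrite Im_Csum; simpl.
  replace 0 with (INR N * 0) by ring. rewrite <- Rsum_const.
  apply Rsum_ext; intros; simpl; ring.
Qed.

Lemma psi_cm i : (i < N)%nat -> cm (psi i) <= 2.
Proof.
  intros Hi. apply cm_le_2. rewrite <- hpsi. unfold inner. rewrite Re_Csum.
  replace (Cnorm2 (psi i)) with (Re (Cmul (Cconj (psi i)) (psi i)))
    by (unfold Cnorm2; simpl; ring).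
  apply (Rsum_term N (fun k => Re (Cmul (Cconj (psi k)) (psi k)))); auto.
  intros; simpl; nra.
Qed.

Lemma ketbra_density : is_density N (ketbra psi).
Proof.
  split; [|split].
  - intros; unfold ketbra; Csolve.
  - intros v. set (q := inner N psi v).
    assert (Happ : forall a, mapply N (ketbra psi) v a = Cmul (psi a) q).
    { intros; unfold mapply, ketbra, q, inner. rewrite <- Csum_mull.
      apply Csum_ext; intros; Csolve. }
    unfold inner at 1.
    rewrite (Csum_ext _ _ (fun a => Cmul (Cmul (Cconj (v a)) (psi a)) q))
      by (intros; rewrite Happ; Csolve).
    rewrite Csum_mulr.
    replace (Csum N (fun a => Cmul (Cconj (v a)) (psi a))) with (Cconj q).
    + destruct q; simpl; nra.
    + unfold q, inner; rewrite <- Csum_conj; apply Csum_ext; intros; Csolve.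
  - unfold trace, ketbra.
    rewrite (Csum_ext _ _ (fun i => Cmul (Cconj (psi i)) (psi i))) by (intros; Csolve).
    exact hpsi.
Qed.

End Target.

(** Since every D_k annihilates psi, both D_k rho_d and D_k^dag D_k rho_d (and
    its adjoint rho_d D_k^dag D_k) vanish, so L(rho_d) = 0; hence all higher
    powers L^m(rho_d) vanish and the exponential series reduces to rho_d. *)

Lemma mmul_zero_l N A B i j :
  (forall k, (k < N)%nat -> A i k = C0) -> mmul N A B i j = C0.
Proof. intros H; unfold mmul; apply Csum_zero; intros; rewrite H; auto; Csolve. Qed.

Lemma mmul_zero_r N A B i j :
  (forall k, (k < N)%nat -> B k j = C0) -> mmul N A B i j = C0.
Proof. intros H; unfold mmul; apply Csum_zero; intros; rewrite H; auto; Csolve. Qed.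

Lemma Lindblad_zero N K Ds X :
  (forall i j, (i < N)%nat -> (j < N)%nat -> X i j = C0) ->
  forall i j, (i < N)%nat -> (j < N)%nat -> Lindblad N K Ds X i j = C0.
Proof.
  intros HX i j Hi Hj. unfold Lindblad. apply Csum_zero; intros k Hk.
  unfold msub, mscal, madd.
  rewrite (mmul_zero_l N (mmul N (Ds k) X)) by (intros; apply mmul_zero_r; auto).
  rewrite (mmul_zero_r N _ X), (mmul_zero_l N X) by auto. Csolve.
Qed.

Section Annihilated.
Variables (N : nat) (psi : Vec) (D : Mat).
Hypothesis hD : forall i, (i < N)%nat -> mapply N D psi i = C0.

Lemma annihilated_mul_ketbra i j : (i < N)%nat -> mmul N D (ketbra psi) i j = C0.
Proof.
  intros Hi. unfold mmul, ketbra.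
  rewrite (Csum_ext _ _ (fun k => Cmul (Cmul (D i k) (psi k)) (Cconj (psi j))))
    by (intros; Csolve).
  rewrite Csum_mulr. change (Csum N (fun k => Cmul (D i k) (psi k))) with (mapply N D psi i).
  rewrite hD; auto. Csolve.
Qed.

Lemma annihilated_DdD_ketbra i j : mmul N (mmul N (adj D) D) (ketbra psi) i j = C0.
Proof.
  unfold mmul at 1.
  rewrite (Csum_ext _ _ (fun k => Csum N (fun l => Cmul (Cmul (adj D i l) (D l k))
                                                        (ketbra psi k j))))
    by (intros; unfold mmul; rewrite Csum_mulr; reflexivity).
  rewrite Csum_swap. apply Csum_zero; intros l Hl.
  rewrite (Csum_ext _ _ (fun k => Cmul (adj D i l) (Cmul (D l k) (ketbra psi k j))))
    by (intros; Csolve).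
  rewrite Csum_mull.
  change (Csum N (fun k => Cmul (D l k) (ketbra psi k j))) with (mmul N D (ketbra psi) l j).
  rewrite annihilated_mul_ketbra; auto. Csolve.
Qed.

Lemma annihilated_ketbra_DdD i j : mmul N (ketbra psi) (mmul N (adj D) D) i j = C0.
Proof.
  unfold mmul at 1.
  rewrite (Csum_ext _ _ (fun k => Csum N (fun l => Cmul (ketbra psi i k)
                                                        (Cmul (adj D k l) (D l j)))))
    by (intros; unfold mmul; rewrite Csum_mull; reflexivity).
  rewrite Csum_swap. apply Csum_zero; intros l Hl.
  rewrite (Csum_ext _ _ (fun k => Cmul (Cmul (psi i) (Cconj (Cmul (D l k) (psi k)))) (D l j)))
    by (intros; unfold ketbra, adj; Csolve).
  rewrite Csum_mulr, Csum_mull, Csum_conj.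
  change (Csum N (fun k => Cmul (D l k) (psi k))) with (mapply N D psi l).
  rewrite hD; auto. Csolve.
Qed.

End Annihilated.

Section Stationary.
Variables (N K : nat) (Ds : nat -> Mat) (psi : Vec).
Hypothesis hkill : forall k, (k < K)%nat -> forall i, (i < N)%nat -> mapply N (Ds k) psi i = C0.

Lemma Lindblad_ketbra i j : (i < N)%nat -> (j < N)%nat -> Lindblad N K Ds (ketbra psi) i j = C0.
Proof.
  intros Hi Hj. unfold Lindblad. apply Csum_zero; intros k Hk. unfold msub, mscal, madd.
  rewrite (mmul_zero_l N (mmul N (Ds k) (ketbra psi)))
    by (intros; apply annihilated_mul_ketbra; auto).
  rewrite annihilated_DdD_ketbra, annihilated_ketbra_DdD; auto. Csolve.
Qed.

Lemma Lpow_ketbra m i j :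
  (i < N)%nat -> (j < N)%nat -> Lpow N K Ds (S m) (ketbra psi) i j = C0.
Proof.
  revert i j; induction m as [|m IH]; intros i j Hi Hj.
  - apply Lindblad_ketbra; auto.
  - apply Lindblad_zero; auto.
Qed.

Lemma Evol_ketbra t : Evol N K Ds t (ketbra psi) (ketbra psi).
Proof.
  intros i j Hi Hj.
  (* the partial sums of the series are constantly equal to rho_d *)
  assert (Hconst : forall g : C -> R, g C0 = 0 ->
     g (Cscal 1 (ketbra psi i j)) = g (ketbra psi i j) ->
     infinite_sum (fun m => g (Cscal (t ^ m / INR (fact m)) (Lpow N K Ds m (ketbra psi) i j)))
                  (g (ketbra psi i j))).
  { intros g g0 g1 eps Heps. exists 0%nat. intros p _.
    replace (sum_f_R0 _ p) with (g (ketbra psi i j)).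
    { unfold R_dist. rewrite Rminus_diag_eq, Rabs_R0; auto. }
    induction p as [|p IHp].
    - simpl. replace (1 / 1) with 1 by field. symmetry; exact g1.
    - cbn [sum_f_R0]. rewrite <- IHp, Lpow_ketbra; auto.
      replace (Cscal _ C0) with C0 by Csolve. rewrite g0; ring. }
  split; apply Hconst; simpl; ring.
Qed.

End Stationary.

Lemma H0_comb n d K Ns rhod x y a c :
  H0 n d K Ns rhod x -> H0 n d K Ns rhod y ->
  H0 n d K Ns rhod (fun i => Csub (Cmul a (x i)) (Cmul c (y i))).
Proof.
  intros Hx Hy k Hk.
  destruct (Hx k Hk) as [w1 Hw1], (Hy k Hk) as [w2 Hw2].
  exists (fun i => Csub (Cmul a (w1 i)) (Cmul c (w2 i))). intros i Hi.
  rewrite mapply_lin, Hw1, Hw2; auto.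
Qed.

Definition hw_witness (N : nat) (psi y : Vec) (s : Mat) (j : nat) : Vec :=
  fun i => Csub (Cmul (inner N psi y) (s i j)) (Cmul (inner N psi (fun k => s k j)) (y i)).

Lemma hw_witness_in_Hw n d K Ns psi (s : Mat) (y : Vec) j :
  (forall v, H0 n d K Ns (ketbra psi) (mapply (dimH n d) s v)) ->
  H0 n d K Ns (ketbra psi) y -> (j < dimH n d)%nat ->
  Hw n d K Ns psi (hw_witness (dimH n d) psi y s j).
Proof.
  intros Hs Hy Hj. set (N := dimH n d) in *. split.
  - unfold hw_witness.
    apply (H0_comb n d K Ns (ketbra psi) (fun i => s i j) y); auto.
    intros k Hk. destruct (Hs (ev j) k Hk) as [w Hw]. exists w. intros i Hi.
    rewrite <- Hw, mapply_ev; auto.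
  - intros u [c Hu]. unfold inner, hw_witness.
    rewrite (Csum_ext _ _ (fun i => Cmul (Cconj c)
               (Csub (Cmul (inner N psi y) (Cmul (Cconj (psi i)) (s i j)))
                     (Cmul (inner N psi (fun k => s k j)) (Cmul (Cconj (psi i)) (y i))))))
      by (intros i Hi; rewrite Hu; auto; Csolve).
    rewrite Csum_mull, Csum_sub, !Csum_mull.
    change (dimH n d) with N. fold (inner N psi (fun k => s k j)) (inner N psi y). Csolve.
Qed.

Lemma range_perp_Hw n d K Ns psi (H' : Vec -> Prop) (r : Mat) (z : Vec) l :
  (forall v, H' v -> perp_Hw n d K Ns psi v) ->
  (forall v, H' (mapply (dimH n d) r v)) ->
  Hw n d K Ns psi z -> (l < dimH n d)%nat ->
  Csum (dimH n d) (fun i => Cmul (Cconj (z i)) (r i l)) = C0.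
Proof.
  intros hH'w Hr Hz Hl. rewrite <- (hH'w _ (Hr (ev l)) z Hz). unfold inner.
  apply Csum_ext; intros i Hi. rewrite mapply_ev; auto.
Qed.

Lemma hs_entry N A B i j : (i < N)%nat -> (j < N)%nat ->
  Cnorm2 (Csub (A i j) (B i j)) <= hsdist2 N A B.
Proof.
  intros Hi Hj. unfold hsdist2. eapply Rle_trans.
  - apply (Rsum_term N (fun j => Cnorm2 (Csub (A i j) (B i j)))); auto.
    intros; apply Cnorm2_nonneg.
  - apply (Rsum_term N (fun i => Rsum N (fun j => Cnorm2 (Csub (A i j) (B i j))))); auto.
    intros; apply Rsum_nonneg; intros; apply Cnorm2_nonneg.
Qed.

Lemma hs_close N A B delta : 0 < delta -> hsdist2 N A B < delta * delta / 4 ->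
  forall i j, (i < N)%nat -> (j < N)%nat -> cm (Csub (A i j) (B i j)) <= delta.
Proof.
  intros Hd Hhs i j Hi Hj. pose proof (hs_entry N A B i j Hi Hj).
  pose proof (cm_sq (Csub (A i j) (B i j))). pose proof (cm_nonneg (Csub (A i j) (B i j))).
  nra.
Qed.

Lemma hs_bound N A B beta :
  (forall i j, (i < N)%nat -> (j < N)%nat -> cm (Csub (A i j) (B i j)) <= beta) ->
  hsdist2 N A B <= INR N * (INR N * (beta * beta)).
Proof.
  intros H. unfold hsdist2. apply Rsum_bound; intros i Hi. apply Rsum_bound; intros j Hj.
  eapply Rle_trans; [apply Cnorm2_cm|].
  pose proof (cm_nonneg (Csub (A i j) (B i j))). pose proof (H i j Hi Hj). nra.
Qed.

(** Let r be a density operator, s a density operator with range in H_0 that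
    is delta-close to r entrywise, and s0 an operator delta-close to rho_d
    (so y := s0 psi is close to psi). Suppose r is orthogonal to the H_w
    witnesses built from s and y. Writing w := r psi, the "defect"
    x_ji := r_ji - w_j conj(psi_i), i.e. the matrix r (I - |psi><psi|), satisfies
    sum_i |x_ji|^2 = Re sum_i x_ji r_ij, and by orthogonality this sum differs
    from 0 only by terms of size O(delta). Hence r (I - |psi><psi|) = O(sqrt delta);
    by hermiticity r = q |psi><psi| + O(sqrt delta) with q = <w,psi>, and
    Tr r = 1 forces q = 1 + O(sqrt delta). The squared HS distance of r to
    rho_d is therefore O(delta). *)

(* Constant such that the orthogonality defect below is at most delta * defect_const. *)
Definition defect_const (N : nat) : R := let nN := INR N in
  nN * (2 * (nN * 2)) * 2 + 1 + (nN * 2 * (2 + 2 * nN) + nN * (2 * 2) * (nN * 2)).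

(* Constant of the final estimate  hsdist2 r rho_d <= stab_const N * delta. *)
Definition stab_const (N : nat) : R := let nN := INR N in
  nN * (nN * ((1 + 4 * nN) * (1 + 4 * nN) * ((1 + 4 * nN) * (1 + 4 * nN)) *
              (4 * nN * defect_const N))).

Lemma defect_const_nonneg N : 0 <= defect_const N.
Proof. unfold defect_const. pose proof (pos_INR N). simpl. nra. Qed.

Lemma stab_const_nonneg N : 0 <= stab_const N.
Proof.
  unfold stab_const. pose proof (pos_INR N) as HN. pose proof (defect_const_nonneg N).
  set (L := (1 + 4 * INR N) * (1 + 4 * INR N)).
  assert (0 <= L * L) by nra. assert (0 <= 4 * INR N * defect_const N) by nra.
  assert (0 <= L * L * (4 * INR N * defect_const N)) by nra. simpl. nra.
Qed.

Section Estimate.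
Variables (N : nat) (psi : Vec) (r s s0 : Mat) (delta : R).
Hypothesis hpsi : Re (inner N psi psi) = 1.
Hypothesis hr : is_density N r.
Hypothesis hs : is_density N s.
Hypothesis hd0 : 0 <= delta.
Hypothesis hd1 : delta <= 1.
Hypothesis hsr : forall i j, (i < N)%nat -> (j < N)%nat -> cm (Csub (s i j) (r i j)) <= delta.
Hypothesis hs0 : forall i j, (i < N)%nat -> (j < N)%nat ->
  cm (Csub (s0 i j) (ketbra psi i j)) <= delta.

Let nN := INR N.
Let y := mapply N s0 psi.
Let w := mapply N r psi.
Let a := inner N psi y.
Let col_overlap (j : nat) := inner N psi (fun k => s k j).

Hypothesis horth : forall j, (j < N)%nat ->
  Csum N (fun i => Cmul (Cconj (hw_witness N psi y s j i)) (r i j)) = C0.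

Lemma nN_nonneg : 0 <= nN.
Proof. apply pos_INR. Qed.

Lemma psi_sum : Csum N (fun i => Cmul (Cconj (psi i)) (psi i)) = Cone.
Proof. exact (psi_inner N psi hpsi). Qed.

Lemma psi_entry_cm i : (i < N)%nat -> cm (psi i) <= 2.
Proof. exact (psi_cm N psi hpsi i). Qed.

Lemma approx_psi_close i : (i < N)%nat -> cm (Csub (y i) (psi i)) <= nN * (delta * 2).
Proof.
  intros Hi. replace (Csub (y i) (psi i))
    with (Csum N (fun k => Cmul (Csub (s0 i k) (ketbra psi i k)) (psi k))).
  - apply cm_Csum_bound; intros k Hk.
    apply cm_mul_bound; [apply hs0 | apply psi_entry_cm]; auto.
  - transitivity (Csub (Csum N (fun k => Cmul (s0 i k) (psi k)))
                         (Csum N (fun k => Cmul (Cmul (psi i) (Cconj (psi k))) (psi k)))).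
    + rewrite <- Csum_sub. apply Csum_ext; intros; unfold ketbra; Csolve.
    + unfold y, mapply. f_equal.
      rewrite (Csum_ext _ _ (fun k => Cmul (psi i) (Cmul (Cconj (psi k)) (psi k))))
        by (intros; Csolve).
      rewrite Csum_mull, psi_sum. Csolve.
Qed.

Lemma approx_psi_cm i : (i < N)%nat -> cm (y i) <= 2 + 2 * nN.
Proof.
  intros Hi. replace (y i) with (Cadd (psi i) (Csub (y i) (psi i))) by Csolve.
  eapply Rle_trans; [apply cm_add|].
  pose proof (approx_psi_close i Hi). pose proof (psi_entry_cm i Hi).
  pose proof nN_nonneg. nra.
Qed.

Lemma overlap_close : cm (Csub a Cone) <= nN * (2 * (nN * (delta * 2))).
Proof.
  replace (Csub a Cone) with (Csum N (fun i => Cmul (Cconj (psi i)) (Csub (y i) (psi i)))).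
  - apply cm_Csum_bound; intros. apply cm_mul_bound.
    + rewrite cm_conj; auto using psi_entry_cm.
    + apply approx_psi_close; auto.
  - rewrite <- psi_sum. unfold a, inner. rewrite <- Csum_sub. apply Csum_ext; intros; Csolve.
Qed.

Lemma scaled_s_close i j : (i < N)%nat -> (j < N)%nat ->
  cm (Csub (Cmul a (s i j)) (r i j)) <= nN * (2 * (nN * (delta * 2))) * 2 + delta.
Proof.
  intros Hi Hj.
  replace (Csub (Cmul a (s i j)) (r i j))
    with (Cadd (Cmul (Csub a Cone) (s i j)) (Csub (s i j) (r i j))) by Csolve.
  eapply Rle_trans; [apply cm_add|]. apply Rplus_le_compat; auto.
  apply cm_mul_bound; [apply overlap_close | apply (dens_cm N s hs); auto].
Qed.

Lemma w_conj j : (j < N)%nat -> Cconj (w j) = inner N psi (fun k => r k j).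
Proof.
  intros Hj. unfold w, mapply, inner. rewrite <- Csum_conj. apply Csum_ext; intros.
  rewrite (dens_herm N r hr k j); auto. Csolve.
Qed.

Lemma col_overlap_close j : (j < N)%nat ->
  cm (Csub (col_overlap j) (Cconj (w j))) <= nN * (2 * delta).
Proof.
  intros Hj. rewrite w_conj; auto. unfold col_overlap, inner. rewrite <- Csum_sub.
  apply cm_Csum_bound; intros.
  replace (Csub _ _) with (Cmul (Cconj (psi k)) (Csub (s k j) (r k j))) by Csolve.
  apply cm_mul_bound; auto. rewrite cm_conj; auto using psi_entry_cm.
Qed.

Lemma w_cm j : (j < N)%nat -> cm (w j) <= nN * (2 * 2).
Proof.
  intros Hj. unfold w, mapply. apply cm_Csum_bound; intros. apply cm_mul_bound.
  - apply (dens_cm N r hr); auto.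
  - apply psi_entry_cm; auto.
Qed.

Lemma witness_tail_close i j : (i < N)%nat -> (j < N)%nat ->
  cm (Csub (Cmul (col_overlap j) (y i)) (Cmul (Cconj (w j)) (psi i))) <=
  nN * (2 * delta) * (2 + 2 * nN) + nN * (2 * 2) * (nN * (delta * 2)).
Proof.
  intros Hi Hj.
  replace (Csub _ _) with (Cadd (Cmul (Csub (col_overlap j) (Cconj (w j))) (y i))
                                (Cmul (Cconj (w j)) (Csub (y i) (psi i)))) by Csolve.
  eapply Rle_trans; [apply cm_add|]. apply Rplus_le_compat; apply cm_mul_bound.
  - apply col_overlap_close; auto.
  - apply approx_psi_cm; auto.
  - rewrite cm_conj; apply w_cm; auto.
  - apply approx_psi_close; auto.
Qed.

Let defect (j i : nat) : C := Csub (r j i) (Cmul (w j) (Cconj (psi i))).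

Lemma defect_witness_close i j : (i < N)%nat -> (j < N)%nat ->
  cm (Csub (defect j i) (Cconj (hw_witness N psi y s j i))) <= delta * defect_const N.
Proof.
  intros Hi Hj.
  replace (Csub _ _) with (Cconj (Cadd (Copp (Csub (Cmul a (s i j)) (r i j)))
        (Csub (Cmul (col_overlap j) (y i)) (Cmul (Cconj (w j)) (psi i))))).
  2:{ unfold defect, hw_witness, a, col_overlap.
      rewrite (dens_herm N r hr j i); auto. Csolve. }
  rewrite cm_conj. eapply Rle_trans; [apply cm_add|]. rewrite cm_opp.
  eapply Rle_trans;
    [apply Rplus_le_compat; [apply scaled_s_close | apply witness_tail_close]; auto|].
  unfold defect_const; fold nN; simpl. right; ring.
Qed.

(* Since each defect row is orthogonal to psi, its squared norm is a pairing with r. *)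
Lemma defect_norm2 j : (j < N)%nat ->
  Rsum N (fun i => Cnorm2 (defect j i)) = Re (Csum N (fun i => Cmul (defect j i) (r i j))).
Proof.
  intros Hj.
  rewrite (Csum_ext _ _ (fun i => Cadd (Cmul (defect j i) (Cconj (defect j i)))
                                       (Cmul (Cconj (w j)) (Cmul (defect j i) (psi i))))).
  2:{ intros k Hk. rewrite (dens_herm N r hr k j); auto. unfold defect. Csolve. }
  rewrite Csum_add, Csum_mull.
  replace (Csum N (fun i => Cmul (defect j i) (psi i))) with C0.
  - simpl. rewrite Re_Csum.
    rewrite (Rsum_ext N (fun k => Re (Cmul (defect j k) (Cconj (defect j k))))
                        (fun i => Cnorm2 (defect j i))).
    + ring.
    + intros; unfold Cnorm2; destruct (defect j k); simpl; ring.
  - unfold defect.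
    rewrite (Csum_ext _ _ (fun i => Csub (Cmul (r j i) (psi i))
                                         (Cmul (w j) (Cmul (Cconj (psi i)) (psi i)))))
      by (intros; Csolve).
    rewrite Csum_sub, Csum_mull, psi_sum.
    change (Csum N (fun i => Cmul (r j i) (psi i))) with (w j). Csolve.
Qed.

Lemma defect_pairing_small j : (j < N)%nat ->
  cm (Csum N (fun i => Cmul (defect j i) (r i j))) <= nN * (delta * defect_const N * 2).
Proof.
  intros Hj.
  replace (Csum N (fun i => Cmul (defect j i) (r i j))) with
    (Csum N (fun i => Cmul (Csub (defect j i) (Cconj (hw_witness N psi y s j i))) (r i j))).
  - apply cm_Csum_bound; intros i Hi. apply cm_mul_bound.
    + apply defect_witness_close; auto.
    + apply (dens_cm N r hr); auto.
  - rewrite (Csum_ext _ _ (fun i => Csub (Cmul (defect j i) (r i j))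
                  (Cmul (Cconj (hw_witness N psi y s j i)) (r i j)))) by (intros; Csolve).
    rewrite Csum_sub, horth; auto. Csolve.
Qed.

Let gam := sqrt (4 * nN * (delta * defect_const N)).

Lemma gam_sq : gam * gam = 4 * nN * (delta * defect_const N).
Proof.
  apply sqrt_sqrt. pose proof nN_nonneg. pose proof (defect_const_nonneg N).
  assert (0 <= delta * defect_const N) by nra. nra.
Qed.

Lemma defect_small j i : (j < N)%nat -> (i < N)%nat -> cm (defect j i) <= gam.
Proof.
  intros Hj Hi.
  assert (Hx : Cnorm2 (defect j i) <= nN * (delta * defect_const N * 2)).
  { eapply Rle_trans; [| apply (defect_pairing_small j Hj)].
    eapply Rle_trans; [| apply Rabs_Re_le_cm].
    rewrite <- defect_norm2; auto. eapply Rle_trans; [| apply Rle_abs].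
    apply (Rsum_term N (fun i => Cnorm2 (defect j i))); auto.
    intros; apply Cnorm2_nonneg. }
  pose proof (cm_sq (defect j i)). pose proof (cm_nonneg (defect j i)).
  pose proof gam_sq. pose proof (sqrt_pos (4 * nN * (delta * defect_const N))).
  fold gam in H2. nra.
Qed.

(* By hermiticity, also (I - |psi><psi|) r is small. *)
Lemma left_defect_small j k : (j < N)%nat -> (k < N)%nat ->
  cm (Csub (r j k) (Cmul (psi j) (Cconj (w k)))) <= gam.
Proof.
  intros Hj Hk. replace (Csub _ _) with (Cconj (defect k j)).
  - rewrite cm_conj; apply defect_small; auto.
  - unfold defect. rewrite (dens_herm N r hr j k); auto. Csolve.
Qed.

Let q := inner N w psi.

Lemma w_close j : (j < N)%nat -> cm (Csub (w j) (Cmul (psi j) q)) <= nN * (gam * 2).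
Proof.
  intros Hj. replace (Csub (w j) (Cmul (psi j) q)) with
    (Csum N (fun k => Cmul (Csub (r j k) (Cmul (psi j) (Cconj (w k)))) (psi k))).
  - apply cm_Csum_bound; intros; apply cm_mul_bound;
      [apply left_defect_small | apply psi_entry_cm]; auto.
  - unfold q, inner. rewrite <- Csum_mull.
    change (w j) with (Csum N (fun k => Cmul (r j k) (psi k))). rewrite <- Csum_sub.
    apply Csum_ext; intros; Csolve.
Qed.

Lemma r_close_multiple j k : (j < N)%nat -> (k < N)%nat ->
  cm (Csub (r j k) (Cmul q (ketbra psi j k))) <= (1 + 4 * nN) * gam.
Proof.
  intros Hj Hk.
  replace (Csub _ _) with (Cadd (defect j k) (Cmul (Csub (w j) (Cmul (psi j) q)) (Cconj (psi k))))
    by (unfold defect, ketbra; Csolve).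
  eapply Rle_trans; [apply cm_add|].
  replace ((1 + 4 * nN) * gam) with (gam + nN * (gam * 2) * 2) by ring.
  apply Rplus_le_compat; [apply defect_small; auto|].
  apply cm_mul_bound; [apply w_close; auto | rewrite cm_conj; apply psi_entry_cm; auto].
Qed.

(* Comparing traces: Tr r = 1 = Tr rho_d, so q is close to 1. *)
Lemma q_close : cm (Csub Cone q) <= nN * ((1 + 4 * nN) * gam).
Proof.
  replace (Csub Cone q) with (Csum N (fun j => Csub (r j j) (Cmul q (ketbra psi j j)))).
  - apply cm_Csum_bound; intros; apply r_close_multiple; auto.
  - rewrite Csum_sub, Csum_mull, (dens_trace N r hr).
    rewrite (Csum_ext _ _ (fun i => Cmul (Cconj (psi i)) (psi i)))
      by (intros; unfold ketbra; Csolve).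
    rewrite psi_sum. Csolve.
Qed.

Lemma r_close_target j k : (j < N)%nat -> (k < N)%nat ->
  cm (Csub (r j k) (ketbra psi j k)) <= (1 + 4 * nN) * (1 + 4 * nN) * gam.
Proof.
  intros Hj Hk.
  replace (Csub _ _) with (Cadd (Csub (r j k) (Cmul q (ketbra psi j k)))
                                (Cmul (Csub q Cone) (ketbra psi j k))) by Csolve.
  eapply Rle_trans; [apply cm_add|].
  replace ((1 + 4 * nN) * (1 + 4 * nN) * gam)
    with ((1 + 4 * nN) * gam + nN * ((1 + 4 * nN) * gam) * (2 * 2)) by ring.
  apply Rplus_le_compat; [apply r_close_multiple; auto|].
  apply cm_mul_bound; [rewrite cm_sub_sym; apply q_close|].
  unfold ketbra. apply cm_mul_bound; [|rewrite cm_conj]; apply psi_entry_cm; auto.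
Qed.

Theorem target_estimate : hsdist2 N r (ketbra psi) <= stab_const N * delta.
Proof.
  eapply Rle_trans; [apply hs_bound; exact r_close_target|].
  unfold stab_const; fold nN.
  replace ((1 + 4 * nN) * (1 + 4 * nN) * gam * ((1 + 4 * nN) * (1 + 4 * nN) * gam))
    with ((1 + 4 * nN) * (1 + 4 * nN) * ((1 + 4 * nN) * (1 + 4 * nN)) * (gam * gam)) by ring.
  rewrite gam_sq. right; ring.
Qed.

End Estimate.

Lemma close_to_target N psi eps :
  Re (inner N psi psi) = 1 -> 0 < eps ->
  exists eta, 0 < eta /\ forall r s s0 : Mat,
    is_density N r -> is_density N s ->
    hsdist2 N r s < eta -> hsdist2 N (ketbra psi) s0 < eta ->
    (forall j, (j < N)%nat ->
       Csum N (fun i => Cmul (Cconj (hw_witness N psi (mapply N s0 psi) s j i)) (r i j)) = C0) ->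
    hsdist2 N r (ketbra psi) < eps.
Proof.
  intros hpsi Heps. pose proof (stab_const_nonneg N) as HC.
  set (delta := Rmin 1 (eps / (stab_const N + 1))).
  assert (Hq : 0 < eps / (stab_const N + 1)) by (apply Rdiv_lt_0_compat; lra).
  assert (Hd0 : 0 < delta) by (apply Rmin_glb_lt; lra).
  assert (Hd1 : delta <= 1) by apply Rmin_l.
  assert (Hd2 : delta * (stab_const N + 1) <= eps).
  { pose proof (Rmin_r 1 (eps / (stab_const N + 1))) as H. fold delta in H.
    apply (Rmult_le_compat_r (stab_const N + 1)) in H; [|lra].
    replace (eps / (stab_const N + 1) * (stab_const N + 1)) with eps in H by (field; lra).
    exact H. }
  exists (delta * delta / 4). split; [nra|].
  intros r s s0 hr hs Hrs Hs0 horth.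
  eapply Rle_lt_trans; [apply (target_estimate N psi r s s0 delta); auto; try lra|nra].
  - intros; rewrite cm_sub_sym; apply (hs_close N r s delta); auto.
  - intros; rewrite cm_sub_sym; apply (hs_close N (ketbra psi) s0 delta); auto.
Qed.

Theorem theorem3
  (n : nat) (d : nat -> nat) (hd : forall a, (a < n)%nat -> (1 <= d a)%nat)
  (K : nat) (Ns : nat -> nat -> bool)
  (hNs : forall k, (k < K)%nat ->
           (forall a, Ns k a = true -> (a < n)%nat) /\
           (exists a, (a < n)%nat /\ Ns k a = false))
  (Ds : nat -> Mat) (psi : Vec)
  (hpsi : Re (inner (dimH n d) psi psi) = 1)
  (hQL : forall k, (k < K)%nat -> QL n d (Ns k) (Ds k))
  (hkill : forall k, (k < K)%nat -> forall i, (i < dimH n d)%nat ->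
             mapply (dimH n d) (Ds k) psi i = C0)
  (hGAS : forall (rho0 : Mat) (r : R -> Mat),
            is_density (dimH n d) rho0 ->
            (forall t, 0 <= t -> Evol (dimH n d) K Ds t rho0 (r t)) ->
            forall eps, 0 < eps -> exists T, forall t, T <= t ->
              exists s, dens_in (dimH n d) (H0 n d K Ns (ketbra psi)) s /\
                        hsdist2 (dimH n d) (r t) s < eps)
  (H' : Vec -> Prop) (hH' : is_subspace (dimH n d) H')
  (hdH' : forall v, Hd (dimH n d) psi v -> H' v)
  (hH'w : forall v, H' v -> perp_Hw n d K Ns psi v)
  (hinv : forall (rho0 s : Mat) (t : R), 0 <= t ->
            dens_in (dimH n d) H' rho0 -> Evol (dimH n d) K Ds t rho0 s ->
            dens_in (dimH n d) H' s) :
  forall (rho0 : Mat) (r : R -> Mat),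
    dens_in (dimH n d) H' rho0 ->
    (forall t, 0 <= t -> Evol (dimH n d) K Ds t rho0 (r t)) ->
    forall eps, 0 < eps -> exists T, forall t, T <= t ->
      hsdist2 (dimH n d) (r t) (ketbra psi) < eps.
Proof.
  intros rho0 r Hrho0 Hevol eps Heps.
  destruct (close_to_target (dimH n d) psi eps hpsi Heps) as [eta [Heta Hclose]].
  (* rho_d is stationary, so attractivity of D(H_0) yields s0 in D(H_0) near rho_d *)
  destruct (hGAS (ketbra psi) (fun _ => ketbra psi) (ketbra_density _ psi hpsi)
              (fun t _ => Evol_ketbra _ K Ds psi hkill t) eta Heta) as [T0 HT0].
  destruct (HT0 T0 (Rle_refl _)) as [s0 [Hs0 Hs0d]].
  destruct (hGAS rho0 r (proj1 Hrho0) Hevol eta Heta) as [T1 HT1].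
  exists (Rmax T1 0). intros t Ht.
  assert (Ht0 : 0 <= t) by (eapply Rle_trans; [apply Rmax_r | exact Ht]).
  destruct (HT1 t (Rle_trans _ _ _ (Rmax_l T1 0) Ht)) as [s [Hs Hsd]].
  (* by invariance r(t) has range in H', hence is orthogonal to H_w *)
  pose proof (hinv rho0 (r t) t Ht0 Hrho0 (Hevol t Ht0)) as Hrt.
  apply (Hclose (r t) s s0 (proj1 Hrt) (proj1 Hs) Hsd Hs0d).
  intros j Hj. apply (range_perp_Hw n d K Ns psi H'); auto.
  - exact (proj2 Hrt).
  - apply hw_witness_in_Hw; auto; [exact (proj2 Hs) | exact (proj2 Hs0 psi)].
Qed.
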